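(* Let $k\in\mathbb{Z}$, let $n$ be a positive integer and let $m$ be an odd positive integer. Then $$E_{n-1}^{(k)}(x)=\sum_{l=0}^{n-1}\binom{n-1}{l}m^{l}\sum_{j=1}^{n-l}\sum_{s=0}^{m-1}(-1)^sE_{l}\Big(\frac{s+x}{m}\Big)\frac{1}{j^{k-1}}\frac{S_{1}(n-l,j)}{n-l}.$$
   Context: Euler polynomials $E_n(x)$ are defined by $\frac{2}{e^t+1}e^{xt}=\sum_{n=0}^{\infty}E_n(x)\frac{t^n}{n!}$. For $k\in\mathbb{Z}$, $\mathrm{Ei}_k(x)=\sum_{n=1}^{\infty}\frac{x^n}{n^k(n-1)!}$; the poly-Genocchi polynomials $G_n^{(k)}(x)$ are defined by $\frac{2\,\mathrm{Ei}_k(\log(1+t))}{e^t+1}e^{xt}=\sum_{n=0}^{\infty}G_n^{(k)}(x)\frac{t^n}{n!}$, and the poly-Euler polynomials are $E_n^{(k)}(x)=\frac{G_{n+1}^{(k)}(x)}{n+1}$ ($n\ge0$). $S_1(n,m)$ are the signed Stirling numbers of the first kind: $\frac{(\log(1+t))^m}{m!}=\sum_{n=m}^{\infty}S_1(n,m)\frac{t^n}{n!}$. *)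

(* Formal power series over a number field R are represented
   by their coefficient sequences nat -> R. *)
From mathcomp Require Import all_boot all_order all_algebra.
Set Implicit Arguments. Unset Strict Implicit. Unset Printing Implicit Defensive.
Import Order.TTheory GRing.Theory Num.Theory.
Local Open Scope ring_scope.

Section FPS.
Variable R : numFieldType.
Implicit Types (f g : nat -> R).

Definition ps_one : nat -> R := fun n => (n == 0%N)%:R.
Definition ps_mul f g : nat -> R :=
  fun n => \sum_(i < n.+1) f i * g (n - i)%N.
Fixpoint ps_pow f (i : nat) : nat -> R :=
  match i with 0%N => ps_one | i'.+1 => ps_mul f (ps_pow f i') end.
(* composition f(g(t)), meaningful when g 0 = 0 *)
Definition ps_comp f g : nat -> R :=
  fun n => \sum_(i < n.+1) f i * ps_pow g i n.
Definition ps_scale (c : R) f : nat -> R := fun n => c * f n.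
Definition ps_add f g : nat -> R := fun n => f n + g n.

(* multiplicative inverse of a series with f 0 != 0 *)
Fixpoint ps_inv_list f (n : nat) : seq R :=
  match n with
  | 0%N => [:: (f 0%N)^-1]
  | n'.+1 => let s := ps_inv_list f n' in
      rcons s (- (f 0%N)^-1 *
               \sum_(1 <= i < n'.+2) f i * nth 0 s (n'.+1 - i)%N)
  end.
Definition ps_inv f : nat -> R := fun n => nth 0 (ps_inv_list f n) n.

Definition ps_expa (a : R) : nat -> R := fun n => a ^+ n / n`!%:R.
Definition ps_log1p : nat -> R :=
  fun n => if n is n'.+1 then (-1) ^+ n' / n%:R else 0.
Definition ps_Ei (k : int) : nat -> R :=
  fun n => if n is n'.+1 then ((n%:R ^ k) * n'`!%:R)^-1 else 0.

Definition ps_euler_factor : nat -> R :=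
  ps_scale 2 (ps_inv (ps_add (ps_expa 1) ps_one)).

(* Euler polynomials: 2/(e^t+1) e^{xt} = sum E_n(x) t^n/n! *)
Definition euler_poly (n : nat) (x : R) : R :=
  n`!%:R * ps_mul ps_euler_factor (ps_expa x) n.

(* poly-Genocchi: 2 Ei_k(log(1+t))/(e^t+1) e^{xt} = sum G_n^(k)(x) t^n/n! *)
Definition poly_genocchi (k : int) (n : nat) (x : R) : R :=
  n`!%:R * ps_mul (ps_mul (ps_comp (ps_Ei k) ps_log1p) ps_euler_factor)
                  (ps_expa x) n.

Definition poly_euler (k : int) (n : nat) (x : R) : R :=
  poly_genocchi k n.+1 x / n.+1%:R.

(* signed Stirling numbers of the first kind:
   (log(1+t))^m/m! = sum_{n} S1(n,m) t^n/n!  (values in R) *)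
Definition stirling1 (n m : nat) : R :=
  n`!%:R * ps_pow ps_log1p m n / m`!%:R.
End FPS.

From mathcomp Require Import all_boot all_order all_algebra.
From mathcomp Require Import ring.
Import Order.TTheory GRing.Theory Num.Theory.
Local Open Scope ring_scope.

(* Expanding the generating function of the poly-Genocchi polynomials gives
   E_n^(k)(x) = sum_l C(n,l) E_l(x) c_(n-l), where, by the definition of S1,
   c_d = sum_j S1(d+1,j) / (j^(k-1) (d+1)) collects the coefficients of
   Ei_k(log(1+t)).  The corollary then follows from the multiplication formula
   m^l sum_(s<m) (-1)^s E_l((s+x)/m) = E_l(x) for odd m, the coefficient form of
   2/(e^(mt)+1) sum_(s<m) (-e^t)^s = 2/(e^t+1), itself a consequence of
   1 + e^(mt) = (1 + e^t) sum_(s<m) (-e^t)^s.  Identities between power series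
   are checked on their truncations modulo t^N, where the ring laws of
   polynomials are available. *)

Section TakePoly.
Variable R : nzSemiRingType.
Implicit Types p q : {poly R}.

Lemma take_polyMl N p q : take_poly N (take_poly N p * q) = take_poly N (p * q).
Proof.
apply/polyP=> i; rewrite !coef_take_poly; case: ifP => // ltiN.
rewrite !coefM; apply: eq_bigr => j _.
by rewrite coef_take_poly (leq_ltn_trans (leq_ord j) ltiN).
Qed.

Lemma take_polyMr N p q : take_poly N (p * take_poly N q) = take_poly N (p * q).
Proof.
apply/polyP=> i; rewrite !coef_take_poly; case: ifP => // ltiN.
rewrite !coefM; apply: eq_bigr => j _.
by rewrite coef_take_poly (leq_ltn_trans (leq_subr j i) ltiN).
Qed.

End TakePoly.

Section GeneratingFunctions.
Variable R : numFieldType.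
Implicit Types (f g h : nat -> R) (p q : {poly R}) (a b c x : R).

Definition ps_trunc N f : {poly R} := \poly_(i < N) f i.

Lemma take_poly_trunc N f : take_poly N (ps_trunc N f) = ps_trunc N f.
Proof. by rewrite take_poly_id // size_poly. Qed.

Lemma ps_trunc_mul N f g :
  ps_trunc N (ps_mul f g) = take_poly N (ps_trunc N f * ps_trunc N g).
Proof.
apply/polyP=> i; rewrite coef_take_poly coef_poly; case: ifP => // ltiN.
rewrite coefM; apply: eq_bigr => j _; rewrite !coef_poly.
by rewrite (leq_ltn_trans (leq_ord j) ltiN) (leq_ltn_trans (leq_subr j i) ltiN).
Qed.

Lemma ps_trunc_add N f g :
  ps_trunc N (ps_add f g) = ps_trunc N f + ps_trunc N g.
Proof. by apply/polyP=> i; rewrite coefD !coef_poly; case: ifP; rewrite ?addr0. Qed.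

Lemma ps_trunc_scale N c f : ps_trunc N (ps_scale c f) = c *: ps_trunc N f.
Proof. by apply/polyP=> i; rewrite coefZ !coef_poly; case: ifP; rewrite ?mulr0. Qed.

Lemma ps_trunc_one N : ps_trunc N (ps_one R) = take_poly N 1.
Proof. by apply/polyP=> i; rewrite coef_take_poly coef_poly coef1. Qed.

Lemma ps_mul_coef f g n : ps_mul f g n = (ps_trunc n.+1 f * ps_trunc n.+1 g)`_n.
Proof.
have := congr1 (fun p => p`_n) (ps_trunc_mul n.+1 f g).
by rewrite coef_take_poly coef_poly ltnSn.
Qed.

Lemma ps_mulC f g n : ps_mul f g n = ps_mul g f n.
Proof. by rewrite !ps_mul_coef mulrC. Qed.

Lemma ps_mulA f g h n : ps_mul (ps_mul f g) h n = ps_mul f (ps_mul g h) n.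
Proof.
have coefT p : p`_n = (take_poly n.+1 p)`_n by rewrite coef_take_poly ltnSn.
rewrite !ps_mul_coef !ps_trunc_mul [LHS]coefT [RHS]coefT.
by rewrite take_polyMl take_polyMr mulrA.
Qed.

Lemma ps_mul_expa a b n : ps_mul (ps_expa a) (ps_expa b) n = ps_expa (a + b) n.
Proof.
rewrite /ps_mul /ps_expa addrC exprDn mulr_suml; apply: eq_bigr => i _.
have le_in : (i <= n)%N := leq_ord i.
rewrite -(bin_fact le_in) !natrM mulr_natr.
have := fact_gt0 i; have := fact_gt0 (n - i); have := bin_gt0 n i.
rewrite le_in -!(ltr0n R) => *; field.
by rewrite !gt_eqF.
Qed.

Lemma ps_trunc_expaD N a b : ps_trunc N (ps_expa (a + b)) =
  take_poly N (ps_trunc N (ps_expa a) * ps_trunc N (ps_expa b)).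
Proof. by rewrite -ps_trunc_mul; apply: eq_poly => i _; rewrite ps_mul_expa. Qed.

Lemma ps_trunc_expa_nat N s :
  ps_trunc N (ps_expa (s%:R : R)) = take_poly N (ps_trunc N (ps_expa 1) ^+ s).
Proof.
elim: s => [|s IHs].
  rewrite -ps_trunc_one; apply: eq_poly => i _.
  by rewrite /ps_expa /ps_one expr0n; case: i => [|i]; rewrite ?divr1 ?mul0r.
by rewrite -nat1r ps_trunc_expaD IHs take_polyMr exprS.
Qed.

Lemma size_ps_inv_list f n : size (ps_inv_list f n) = n.+1.
Proof. by elim: n => [|n IHn] //=; rewrite size_rcons IHn. Qed.

Lemma nth_ps_inv_list f n i : (i <= n)%N -> nth 0 (ps_inv_list f n) i = ps_inv f i.
Proof.
elim: n => [|n IHn]; first by rewrite leqn0 => /eqP ->.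
rewrite leq_eqVlt => /orP[/eqP -> //|lt_in].
by rewrite /= nth_rcons size_ps_inv_list lt_in IHn.
Qed.

Lemma ps_invS f n :
  ps_inv f n.+1 = - (f 0%N)^-1 * \sum_(i < n.+1) f i.+1 * ps_inv f (n - i).
Proof.
rewrite /ps_inv /= nth_rcons size_ps_inv_list ltnn eqxx big_add1 /= big_mkord.
by congr (_ * _); apply: eq_bigr => i _; rewrite subSS nth_ps_inv_list ?leq_subr.
Qed.

Lemma ps_mul_inv f n : f 0%N != 0 -> ps_mul f (ps_inv f) n = ps_one R n.
Proof.
move=> f0_neq0; case: n => [|n]; first by rewrite /ps_mul big_ord1 mulfV.
by rewrite /ps_mul big_ord_recl subn0 ps_invS mulrA mulrN mulfV // mulN1r addNr.
Qed.

Definition ps_dil c f : nat -> R := fun n => c ^+ n * f n.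

Lemma ps_mul_dil c f g n :
  ps_mul (ps_dil c f) (ps_dil c g) n = ps_dil c (ps_mul f g) n.
Proof.
rewrite /ps_mul /ps_dil mulr_sumr; apply: eq_bigr => i _.
have -> : c ^+ n = c ^+ i * c ^+ (n - i) by rewrite -exprD subnKC ?leq_ord.
by rewrite mulrACA.
Qed.

Lemma ps_dil_expa c a n : ps_dil c (ps_expa a) n = ps_expa (c * a) n.
Proof. by rewrite /ps_dil /ps_expa exprMn mulrA. Qed.

Lemma ps_mul_euler_factor n :
  ps_mul (ps_euler_factor R) (ps_add (ps_expa 1) (ps_one R)) n
  = ps_scale 2 (ps_one R) n.
Proof.
set D := ps_add (ps_expa 1) (ps_one R).
have D0_neq0 : D 0%N != 0.
  by rewrite /D /ps_add /ps_expa /ps_one /= expr0 divr1 -mulr2n pnatr_eq0.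
rewrite ps_mulC /ps_scale -(ps_mul_inv D n D0_neq0) /ps_mul mulr_sumr.
by apply: eq_bigr => i _; rewrite mulrCA.
Qed.

Lemma ps_mul_dil_euler_factor c n :
  ps_mul (ps_dil c (ps_euler_factor R)) (ps_add (ps_expa c) (ps_one R)) n
  = ps_scale 2 (ps_one R) n.
Proof.
transitivity
  (ps_dil c (ps_mul (ps_euler_factor R) (ps_add (ps_expa 1) (ps_one R))) n).
  rewrite -ps_mul_dil; apply: eq_bigr => i _; congr (_ * _).
  rewrite /ps_dil /ps_add /ps_expa /ps_one expr1n mul1r mulrDr.
  by case: (_ - _)%N => [|j]; rewrite ?mulr1 ?mulr0.
rewrite /ps_dil ps_mul_euler_factor /ps_scale /ps_one.
by case: n => [|n]; rewrite ?mul1r ?mulr0.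
Qed.

Lemma take_poly_euler_factor_geom N m : odd m ->
  let P := ps_trunc N (ps_expa 1) in
  take_poly N (ps_trunc N (ps_dil m%:R (ps_euler_factor R)) *
               \sum_(s < m) (- P) ^+ s)
  = ps_trunc N (ps_euler_factor R).
Proof.
move=> odd_m P.
set E := ps_trunc N (ps_euler_factor R).
set F := ps_trunc N (ps_dil _ _); set S := \sum_(s < m) _.
have two_neq0 : (2 : R) != 0 by rewrite pnatr_eq0.
have trunc_two g D : (forall n, ps_mul g D n = ps_scale 2 (ps_one R) n) ->
    take_poly N (ps_trunc N g * ps_trunc N D) = 2 *: take_poly N 1.
  by move=> gD; rewrite -ps_trunc_mul -ps_trunc_one -ps_trunc_scale; apply: eq_poly.
have trunc_expa_add1 c : ps_trunc N (ps_add (ps_expa c) (ps_one R))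
                    = take_poly N (ps_trunc N (ps_expa c) + 1).
  by rewrite ps_trunc_add ps_trunc_one take_polyD take_poly_trunc.
have E_P1 : take_poly N (E * (P + 1)) = 2 *: take_poly N 1.
  rewrite -take_polyMr -trunc_expa_add1 trunc_two // => n.
  exact: ps_mul_euler_factor.
have F_Pm1 : take_poly N (F * (P ^+ m + 1)) = 2 *: take_poly N 1.
  rewrite -take_polyMr take_polyD -ps_trunc_expa_nat -take_poly_trunc -take_polyD.
  by rewrite -trunc_expa_add1 trunc_two // => n; apply: ps_mul_dil_euler_factor.
have S_P1 : S * (P + 1) = P ^+ m + 1.
  have := subrX1 (- P) m.
  rewrite exprNn -signr_odd odd_m mulN1r -!opprD mulNr => /oppr_inj ->.
  exact: mulrC.
(* modulo t^N: 2 F S = E (P + 1) F S = E F (P^m + 1) = 2 E *)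
apply: (scalerI two_neq0); rewrite -take_polyZ.
have -> : 2 *: (F * S) = (2 *: 1) * (F * S) by rewrite -scalerAl mul1r.
rewrite -take_polyMl take_polyZ -E_P1 take_polyMl.
have -> : E * (P + 1) * (F * S) = E * (F * (S * (P + 1))) by ring.
rewrite S_P1 -take_polyMr F_Pm1 -scalerAr take_polyZ take_polyMr mulr1.
by rewrite take_poly_trunc.
Qed.

Lemma euler_poly_mult_odd m x l : odd m ->
  (m%:R : R) ^+ l * \sum_(s < m) (-1) ^+ s * euler_poly l ((s%:R + x) / m%:R)
  = euler_poly l x.
Proof.
move=> odd_m; have m_neq0 : (m%:R : R) != 0 by rewrite pnatr_eq0; case: m odd_m.
set N := l.+1; set P := ps_trunc N (ps_expa 1); set X := ps_trunc N (ps_expa x).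
set F := ps_trunc N (ps_dil m%:R (ps_euler_factor R)).
have coefT p : p`_l = (take_poly N p)`_l by rewrite coef_take_poly ltnSn.
have shifted s : (F * P ^+ s * X)`_l =
    m%:R ^+ l * ps_mul (ps_euler_factor R) (ps_expa ((s%:R + x) / m%:R)) l.
  rewrite -mulrA coefT -take_polyMr.
  have -> : take_poly N (P ^+ s * X) = ps_trunc N (ps_expa (s%:R + x)).
    by rewrite ps_trunc_expaD ps_trunc_expa_nat take_polyMl.
  rewrite -coefT -ps_mul_coef -[RHS]/(ps_dil _ _ l) -ps_mul_dil.
  by apply: eq_bigr => i _; rewrite ps_dil_expa (mulrC m%:R) divfK.
rewrite /euler_poly [in RHS]ps_mul_coef coefT.
rewrite -(take_poly_euler_factor_geom N m odd_m) take_polyMl -coefT.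
rewrite [F * _]mulr_sumr mulr_suml coef_sum !mulr_sumr; apply: eq_bigr => s _.
have -> : (- P) ^+ s = (-1) ^+ s *: P ^+ s.
  by rewrite [LHS]exprNn -mul_polyC rmorphXn rmorphN1.
rewrite -scalerAr -scalerAl coefZ shifted; ring.
Qed.

Lemma ps_comp_Ei_log1p0 k : ps_comp (ps_Ei R k) (ps_log1p R) 0 = 0.
Proof. by rewrite /ps_comp big_ord1 mul0r. Qed.

Lemma ps_comp_Ei_log1pS k d :
  d`!%:R * ps_comp (ps_Ei R k) (ps_log1p R) d.+1 =
  \sum_(1 <= j < d.+2) ((j%:R : R) ^ (k - 1))^-1 * (stirling1 R d.+1 j / d.+1%:R).
Proof.
rewrite /ps_comp big_ord_recl mul0r add0r big_add1 big_mkord mulr_sumr.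
apply: eq_bigr => j _; rewrite /ps_Ei /stirling1 /=.
have j1_neq0 : (j.+1%:R : R) != 0 by rewrite pnatr_eq0.
have -> : (j.+1%:R : R) ^ k = (j.+1%:R) ^ (k - 1) * j.+1%:R.
  by rewrite -[in LHS](subrK 1 k) expfzDr // expr1z.
have Jk_neq0 : (j.+1%:R : R) ^ (k - 1) != 0 by rewrite expfz_neq0.
rewrite !factS !natrM; field.
by rewrite add0n !nat1r !pnatr_eq0 -!lt0n !fact_gt0 Jk_neq0.
Qed.

Lemma poly_euler_binomial k n x : poly_euler k n x =
  \sum_(l < n.+1) 'C(n, l)%:R * euler_poly l x *
    \sum_(1 <= j < (n - l).+2)
      ((j%:R : R) ^ (k - 1))^-1 * (stirling1 R (n - l).+1 j / (n - l).+1%:R).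
Proof.
rewrite /poly_euler /poly_genocchi ps_mulA ps_mulC.
set G := ps_mul _ (ps_expa x).
rewrite {1}/ps_mul big_ord_recr /= subnn ps_comp_Ei_log1p0 mulr0 addr0.
rewrite mulr_sumr mulr_suml; apply: eq_bigr => l _.
rewrite subSn ?leq_ord // -ps_comp_Ei_log1pS /euler_poly -/G.
rewrite factS -(bin_fact (leq_ord l)) !natrM.
by field; rewrite nat1r pnatr_eq0.
Qed.

End GeneratingFunctions.

Theorem corollary7 (R : numFieldType) (k : int) (n m : nat) (x : R) :
  (0 < n)%N -> odd m ->
  poly_euler k n.-1 x =
  \sum_(l < n)
    ('C(n.-1, l)%:R * (m%:R : R) ^+ l *
     \sum_(1 <= j < (n - l).+1) \sum_(s < m)
        ((-1) ^+ s * euler_poly l ((s%:R + x) / m%:R)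
         * ((j%:R : R) ^ (k - 1))^-1
         * (stirling1 R (n - l) j / (n - l)%:R))).
Proof.
case: n => [|n] // _ odd_m.
rewrite poly_euler_binomial; apply: eq_bigr => l _.
rewrite subSn ?leq_ord // -(euler_poly_mult_odd _ _ x l odd_m).
rewrite mulrA -mulrA; congr (_ * _).
rewrite big_distrlr exchange_big; apply: eq_bigr => j _; apply: eq_bigr => s _.
exact: mulrA.
Qed.
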